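(* Let $\mathcal I$ be a canonical instance with groups $G_1,\dots,G_k$ and group weights $w_1>\cdots>w_k$, group sizes $n_1,\dots,n_k$, $W_i=n_iw_i$, and define $L_1=0$ and $L_r=\frac{\sum_{j<r}W_j}{w_r}$ for $r=2,\dots,k$. Then for every agent $a_{i,j}$, every $r\in[k]$ and every item $e_h$ with $h>L_r$, we have $v_{i,j}(e_h)\le w_r$.
   Context: Chore-allocation instance: agents, a finite set $\mathcal M=\{e_1,\dots,e_m\}$ of indivisible items, positive weights, additive cost functions $v:2^{\mathcal M}\to\mathbb R_{\ge0}$. The weighted maximin share of agent $a$ with weight $w_a$ and cost $v_a$ is $\mathsf{WMMS}_a=w_a\min_{\text{allocations }(B_b)_b}\max_{b}\frac{v_a(B_b)}{w_b}$, where allocations are ordered partitions of $\mathcal M$ into one (possibly empty) bundle per agent. An instance is canonical if: (i) $\max$ weight is $w_1$, weights sum to $1$, and every weight equals $w_1/2^p$ for some nonnegative integer $p$; (ii) every agent's total cost $v(\mathcal M)=1$, and every single-item cost is either $0$ or $w_1/2^p$ for some nonnegative integer $p$; (iii) every agent has $v(e_1)\ge\cdots\ge v(e_m)$; (iv) every agent's $\mathsf{WMMS}$ equals her weight. Agents are partitioned into groups $G_1,\dots,G_k$ by weight, all agents of $G_i$ having weight $w_i$, with $w_1>w_2>\cdots>w_k$; $G_i=\{a_{i,1},\dots,a_{i,n_i}\}$ and $v_{i,j}$ is the cost function of $a_{i,j}$. *)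

From mathcomp Require Import all_boot all_order all_algebra.
Set Implicit Arguments. Unset Strict Implicit. Unset Printing Implicit Defensive.
Import Order.TTheory GRing.Theory Num.Theory.
Local Open Scope ring_scope.

(* Agents are 'I_n, items are 'I_m (item e_{h} is the ordinal h-1).
   w : agent weights; v a e : cost of the single item e for agent a.     *)

Section Defs.
Variables (R : realFieldType) (n m : nat).

Definition cost (v : 'I_n -> 'I_m -> R) (a : 'I_n) (S : {set 'I_m}) : R :=
  \sum_(e in S) v a e.

Definition bundle (A : {ffun 'I_m -> 'I_n}) (b : 'I_n) : {set 'I_m} :=
  [set e | A e == b].

(* max_b v_a(B_b)/w_b for allocation A (all terms are >= 0) *)
Definition alloc_val (w : 'I_n -> R) (v : 'I_n -> 'I_m -> R) (a : 'I_n)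
    (A : {ffun 'I_m -> 'I_n}) : R :=
  \big[Num.max/0]_(b : 'I_n) (cost v a (bundle A b) / w b).

(* min over all allocations; the neutral element is an upper bound on every
   alloc_val (for positive weights and nonnegative costs), so this is exactly
   the minimum whenever an allocation exists. *)
Definition WMMS (w : 'I_n -> R) (v : 'I_n -> 'I_m -> R) (a : 'I_n) : R :=
  w a * \big[Num.min/(\sum_(b : 'I_n) cost v a setT / w b)]_(A : {ffun 'I_m -> 'I_n})
          alloc_val w v a A.

Definition wmax (w : 'I_n -> R) : R := \big[Num.max/0]_(a : 'I_n) w a.

Definition dyadic_of (x y : R) : Prop := exists p : nat, y = x / 2%:R ^+ p.

Definition canonical_instance (w : 'I_n -> R) (v : 'I_n -> 'I_m -> R) : Prop :=
  [/\ (forall a, 0 < w a) /\ (forall a e, 0 <= v a e),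
      (and (\sum_(a : 'I_n) w a = 1) (forall a, dyadic_of (wmax w) (w a))),
      (and (forall a, cost v a setT = 1)
       (forall a e, or (v a e = 0) (dyadic_of (wmax w) (v a e)))),
      (forall a (e e' : 'I_m), (e <= e')%N -> v a e' <= v a e) &
      (forall a, WMMS w v a = w a)].

(* For the group G_r whose common weight is w b:
   W-sum of all strictly heavier groups = \sum_{j<r} W_j, so
   L_r = (\sum_{c : w c > w b} w c) / w b  (and L_1 = 0). *)
Definition Lgroup (w : 'I_n -> R) (b : 'I_n) : R :=
  (\sum_(c : 'I_n | w b < w c) w c) / w b.

End Defs.

(* In an allocation witnessing WMMS_a = w_a every bundle B_c costs at most
   w_c for agent a.  If v_a(e_h) > w_r then, costs being sorted, each of the
   h items e_1, ..., e_h costs more than w_r, so it can only lie in a bundle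
   of an agent heavier than w_r.  Hence h w_r < v_a(e_1 .. e_h) is at most the
   total weight of the groups heavier than G_r, which is L_r w_r. *)

From mathcomp Require Import all_boot all_order all_algebra.
Set Implicit Arguments. Unset Strict Implicit. Unset Printing Implicit Defensive.
Import Order.TTheory GRing.Theory Num.Theory.
Local Open Scope ring_scope.

Section CostAndAllocations.

Variables (R : realFieldType) (n m : nat).
Variables (w : 'I_n -> R) (v : 'I_n -> 'I_m -> R) (a : 'I_n).
Hypotheses (w_gt0 : forall c, 0 < w c) (v_ge0 : forall e, 0 <= v a e).

Lemma sum_le_cost (P : pred 'I_m) (S : {set 'I_m}) :
  (forall e, P e -> e \in S) -> \sum_(e | P e) v a e <= cost v a S.
Proof.
move=> PS; rewrite /cost [X in _ <= X]big_mkcond [X in X <= _]big_mkcond /=.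
apply: ler_sum => e _; case: (boolP (P e)) => [/PS -> // | _].
by case: ifP.
Qed.

Lemma cost_ge0 (S : {set 'I_m}) : 0 <= cost v a S.
Proof. exact: sumr_ge0. Qed.

Lemma item_le_cost (e : 'I_m) (S : {set 'I_m}) : e \in S -> v a e <= cost v a S.
Proof. by move=> eS; rewrite /cost (bigD1 e) //= lerDl sumr_ge0. Qed.

Lemma alloc_val_le_total (A : {ffun 'I_m -> 'I_n}) :
  alloc_val w v a A <= \sum_(b : 'I_n) cost v a setT / w b.
Proof.
have term_ge0 b : 0 <= cost v a setT / w b by rewrite divr_ge0 ?cost_ge0 ?ltW.
apply/bigmax_leP; split=> [|c _]; first exact: sumr_ge0.
apply: (@le_trans _ _ (cost v a setT / w c)).
  rewrite ler_pM2r ?invr_gt0 //.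
  by apply: (sum_le_cost (P := mem (bundle A c))) => e _; exact: in_setT.
by rewrite (bigD1 c) //= lerDl sumr_ge0.
Qed.

Lemma WMMS_attained : exists A, WMMS w v a = w a * alloc_val w v a A.
Proof.
pose A0 : {ffun 'I_m -> 'I_n} := [ffun=> a].
have [A _ attained] := eq_bigmin A0 predT (alloc_val w v a) isT
  (fun A _ => alloc_val_le_total A).
by exists A; rewrite /WMMS -attained.
Qed.

Lemma WMMS_le_weight_witness :
  WMMS w v a <= w a -> exists A, forall c, cost v a (bundle A c) <= w c.
Proof.
have [A ->] := WMMS_attained; rewrite ger_pMr // => val_le1.
exists A => c; rewrite -[w c]mul1r -ler_pdivrMr //.
exact: le_trans (le_bigmax _ _ c) val_le1.
Qed.

Lemma sum_costly_items_le (A : {ffun 'I_m -> 'I_n}) (x : R) (P : pred 'I_m) :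
  (forall c, cost v a (bundle A c) <= w c) -> (forall e, P e -> x < v a e) ->
  \sum_(e | P e) v a e <= \sum_(c | x < w c) w c.
Proof.
move=> A_le P_costly; rewrite (partition_big A predT) //= [X in _ <= X]big_mkcond.
apply: ler_sum => c _.
have bundle_sum : \sum_(e | P e && (A e == c)) v a e <= cost v a (bundle A c).
  by apply: sum_le_cost => e /andP[_ /eqP Ae]; rewrite inE Ae.
case: ltP => [_ | wc_le_x]; first exact: le_trans bundle_sum (A_le c).
rewrite big_pred0 // => e; apply/negbTE/andP => -[/P_costly x_lt /eqP Ae].
have e_in : e \in bundle A c by rewrite inE Ae.
have := le_trans (item_le_cost e_in) (A_le c).
by rewrite leNgt (le_lt_trans wc_le_x x_lt).
Qed.

End CostAndAllocations.

Lemma prefix_sum_ge (R : realFieldType) (m : nat) (f : 'I_m -> R) (h : 'I_m) :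
  {homo f : e e' / (e <= e')%N >-> e' <= e} ->
  h.+1%:R * f h <= \sum_(e < m | (e < h.+1)%N) f e.
Proof.
move=> f_antitone; rewrite (big_ord_narrow (ltn_ord h)).
rewrite mulr_natl -[X in _ *+ X]card_ord -sumr_const.
by apply: ler_sum => e _; apply: f_antitone; rewrite /= -ltnS.
Qed.

Theorem mainTheorem7 (R : realFieldType) (n m : nat)
    (w : 'I_n -> R) (v : 'I_n -> 'I_m -> R) :
  canonical_instance w v ->
  forall (a b : 'I_n) (h : 'I_m),
    Lgroup w b < (nat_of_ord h).+1%:R -> v a h <= w b.
Proof.
move=> [[w_gt0 v_ge0] _ _ v_sorted WMMS_eq] a b h L_lt.
have [|A A_le] := WMMS_le_weight_witness w_gt0 (v_ge0 a); first by rewrite WMMS_eq.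
rewrite leNgt; apply/negP => wb_lt.
have prefix_costly (e : 'I_m) : (e < h.+1)%N -> w b < v a e.
  by rewrite ltnS => /(v_sorted a); exact: lt_le_trans wb_lt.
have upper := sum_costly_items_le (v_ge0 a) A_le prefix_costly.
have lower := prefix_sum_ge h (v_sorted a).
move: L_lt; rewrite /Lgroup ltr_pdivrMr // => heavy_lt.
have := le_lt_trans (le_trans lower upper) heavy_lt.
by rewrite ltr_pM2l // ltNge (ltW wb_lt).
Qed.
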